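(* Let $\Gamma=\mathbb{Z}\times F_2=\langle h,c_1,c_2\mid hc_1=c_1h,\ hc_2=c_2h\rangle$, set $c_3=c_1c_2$, and in $\mathbb{C}[{\mathcal{X}}(\Gamma)]$ set $u=t_h$, $x_i=t_{c_i}$, $y_i=t_{hc_i}$ for $i=1,2,3$. Then the $\mathbb{C}$-algebra map $\mathbb{C}[u,x_1,x_2,x_3,y_1,y_2,y_3]\to\mathbb{C}[{\mathcal{X}}(\Gamma)]$ (polynomial variables sent to the elements of the same name) is surjective with kernel the ideal $J$ generated by (1) $u^2+x_i^2+y_i^2-ux_iy_i-4$ for $i=1,2,3$; (2) $2y_i-(ux_i+x_jy_3-x_3y_j)$ for $\{i,j\}=\{1,2\}$; (3) $2y_3-\big(u(x_3-x_1x_2)+y_1x_2+y_2x_1\big)$; (4) $2x_3-(uy_3+x_1x_2-y_1y_2)$. Hence $\mathbb{C}[{\mathcal{X}}(\Gamma)]\cong\mathbb{C}[u,x_1,x_2,x_3,y_1,y_2,y_3]/J$.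
   Context: For a finitely generated group $\Gamma$, $\mathbb{C}[{\mathcal{X}}(\Gamma)]$ is the coordinate ring of the $\mathrm{SL}_2(\mathbb{C})$-character scheme of $\Gamma$; equivalently, the commutative $\mathbb{C}$-algebra generated by symbols $t_x$, $x\in\Gamma$, subject to $t_{xy}+t_{xy^{-1}}=t_xt_y$, $t_{xy}=t_{yx}$ ($x,y\in\Gamma$) and $t_1=2$. *)

From HB Require Import structures.
From mathcomp Require Import all_boot all_order all_algebra.
From mathcomp Require Import finmap.
From mathcomp Require Import complex.
From mathcomp Require Import Rstruct.
From mathcomp.multinomials Require Import monalg.

Set Implicit Arguments.
Unset Strict Implicit.
Unset Printing Implicit Defensive.

Import Order.TTheory GRing.Theory Num.Theory.
Local Open Scope ring_scope.

Definition C : Type := complex Rdefinitions.R.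

(* The free group F_2 on c1 (letter false) and c2 (letter true), as
   freely reduced words.  A letter is (generator, is_inverse).         *)
Definition letter := (bool * bool)%type.
Definition inv_letter (l : letter) : letter := (l.1, ~~ l.2).

Definition reduced (w : seq letter) : bool :=
  sorted (fun a b => b != inv_letter a) w.

Fixpoint red (w : seq letter) : seq letter :=
  match w with
  | [::] => [::]
  | l :: w' =>
      match red w' with
      | [::] => [:: l]
      | l' :: r => if l' == inv_letter l then r else l :: l' :: r
      end
  end.

Lemma red_reduced w : reduced (red w).
Proof.
elim: w => [|l w IH] //=.
case E: (red w) => [|l' r] //.
rewrite E in IH.
case: ifP => H.
  exact: (path_sorted IH).
by rewrite /reduced /= H.
Qed.

Definition F2 := {w : seq letter | reduced w}.

Definition mkF2 (w : seq letter) : F2 := exist _ (red w) (red_reduced w).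
Definition F2one : F2 := mkF2 [::].
Definition F2mul (x y : F2) : F2 := mkF2 (sval x ++ sval y).
Definition F2inv (x : F2) : F2 := mkF2 (rev (map inv_letter (sval x))).

Definition Gam := (int * F2)%type.
Definition Gone : Gam := (0%R, F2one).
Definition Gmul (x y : Gam) : Gam := (x.1 + y.1, F2mul x.2 y.2).
Definition Ginv (x : Gam) : Gam := (- x.1, F2inv x.2).

Definition gh  : Gam := (1%R, F2one).
Definition gc1 : Gam := (0%R, mkF2 [:: (false, false)]).
Definition gc2 : Gam := (0%R, mkF2 [:: (true, false)]).
Definition gc3 : Gam := Gmul gc1 gc2.

Definition ideal_gen (R : comRingType) (S : R -> Prop) (p : R) : Prop :=
  exists (n : nat) (a s : 'I_n -> R),
    (forall i, S (s i)) /\ p = \sum_(i < n) a i * s i.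

(* The polynomial ring C[t_x : x in Gam] and the defining relations of
   the coordinate ring C[X(Gam)] of the SL_2(C)-character scheme.      *)
Definition PGam := {malg C[cmonom Gam]}.
Definition tvar (x : Gam) : PGam := << ucm x >>.

Definition char_rel (p : PGam) : Prop :=
  (exists x y : Gam,
      p = tvar (Gmul x y) + tvar (Gmul x (Ginv y)) - tvar x * tvar y)
  \/ (exists x y : Gam, p = tvar (Gmul x y) - tvar (Gmul y x))
  \/ p = tvar Gone - 2.

(* C[X(Gam)] = PGam / charI ; membership in charI is equality to 0 in
   the quotient. *)
Definition charI (p : PGam) : Prop := ideal_gen char_rel p.

Definition Q7 := {mpoly C[7]}.
Definition V (i : 'I_7) : Q7 := << ucm i >>.
Definition vu  : Q7 := V (@Ordinal 7 0 isT).
Definition vx1 : Q7 := V (@Ordinal 7 1 isT).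
Definition vx2 : Q7 := V (@Ordinal 7 2 isT).
Definition vx3 : Q7 := V (@Ordinal 7 3 isT).
Definition vy1 : Q7 := V (@Ordinal 7 4 isT).
Definition vy2 : Q7 := V (@Ordinal 7 5 isT).
Definition vy3 : Q7 := V (@Ordinal 7 6 isT).

Definition img_var (i : 'I_7) : PGam :=
  match val i with
  | 0 => tvar gh
  | 1 => tvar gc1
  | 2 => tvar gc2
  | 3 => tvar gc3
  | 4 => tvar (Gmul gh gc1)
  | 5 => tvar (Gmul gh gc2)
  | _ => tvar (Gmul gh gc3)
  end.

(* The C-algebra map C[u,...,y3] -> C[t_x] sending each variable to its
   image (composing with the projection onto C[X(Gam)] gives phi). *)
Definition psi (q : Q7) : PGam :=
  mmap (fun c : C => c%:MP)
       (fun m : cmonom 'I_7 => \prod_(i < 7) img_var i ^+ m i) q.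

Definition Jgens : seq Q7 :=
  [:: vu ^+ 2 + vx1 ^+ 2 + vy1 ^+ 2 - vu * vx1 * vy1 - 4;
      vu ^+ 2 + vx2 ^+ 2 + vy2 ^+ 2 - vu * vx2 * vy2 - 4;
      vu ^+ 2 + vx3 ^+ 2 + vy3 ^+ 2 - vu * vx3 * vy3 - 4;
      2 * vy1 - (vu * vx1 + vx2 * vy3 - vx3 * vy2);
      2 * vy2 - (vu * vx2 + vx1 * vy3 - vx3 * vy1);
      2 * vy3 - (vu * (vx3 - vx1 * vx2) + vy1 * vx2 + vy2 * vx1);
      2 * vx3 - (vu * vy3 + vx1 * vx2 - vy1 * vy2)].

Definition J (q : Q7) : Prop := ideal_gen (fun g => g \in Jgens) q.

From HB Require Import structures.
From mathcomp Require Import all_boot all_order all_algebra.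
From mathcomp Require Import finmap complex Rstruct.
From mathcomp.multinomials Require Import monalg.
From mathcomp Require Import ring zify.

(* Surjectivity: the relation t_{xy} + t_{xy^-1} = t_x t_y, together with
   t_{xy} = t_{yx}, lowers the h-exponent of t_{h^n w} to 0 or 1, removes
   inverse letters and squares from w (up to cyclic permutation), and reduces
   alternating words to powers of c1 c2; what is left are t_1 = 2 and the seven
   traces u, x_i, y_i.
   J lies in the kernel: each generator of J follows from a handful of trace
   relations, those of type (1) being Fricke's identity for the commuting pairs
   (h, c_i).
   The kernel lies in J: over any commutative ring containing u, x_i, y_i, let M
   be the rank 4 algebra generated by c1, c2 subject to the Cayley-Hamilton
   relations, extended by a central h with h^2 = u h - 1.  Gamma maps to the
   units of M, and the linear form with values 2, x_i, u, y_i on 1, c_i, h, h c_i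
   satisfies the trace relations modulo J (the first one up to a factor 2).  For
   the ring C[u, ..., y3] this gives a retraction of psi modulo J. *)

Set Implicit Arguments.
Unset Strict Implicit.
Unset Printing Implicit Defensive.

Import GRing.Theory Num.Theory.
Local Open Scope ring_scope.

Section IdealGen.
Variables (S : comNzRingType) (P : S -> Prop).
Local Notation I := (ideal_gen P).

Lemma ideal_gen0 : I 0.
Proof. by exists 0%N, (fun _ => 0), (fun _ => 0); split; [case | rewrite big_ord0]. Qed.

Lemma ideal_gen_sub s : P s -> I s.
Proof. by exists 1%N, (fun _ => 1), (fun _ => s); rewrite big_ord1 mul1r. Qed.

Lemma ideal_genD a b : I a -> I b -> I (a + b).
Proof.
move=> [n [ca [sa [Psa ->]]]] [m [cb [sb [Psb ->]]]].
pose glue T (f : 'I_n -> T) (g : 'I_m -> T) i :=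
  match split i with inl j => f j | inr j => g j end.
exists (n + m)%N, (glue _ ca cb), (glue _ sa sb); split.
  by move=> i; rewrite /glue; case: (split i).
rewrite big_split_ord /glue; congr (_ + _); apply: eq_bigr => i _.
  by rewrite (unsplitK (inl i : 'I_n + 'I_m)).
by rewrite (unsplitK (inr i : 'I_n + 'I_m)).
Qed.

Lemma ideal_genM c a : I a -> I (c * a).
Proof.
move=> [n [ca [sa [Psa ->]]]]; exists n, (fun i => c * ca i), sa; split=> //.
by rewrite big_distrr; apply: eq_bigr => i _ /=; rewrite mulrA.
Qed.

Lemma ideal_genN a : I a -> I (- a).
Proof. by rewrite -mulN1r; apply: ideal_genM. Qed.

Lemma ideal_genB a b : I a -> I b -> I (a - b).
Proof. by move=> Ia Ib; apply/ideal_genD/ideal_genN. Qed.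

Lemma ideal_gen_cancel c d p : d * c = 1 -> I (c * p) -> I p.
Proof. by move=> dc /(ideal_genM d); rewrite mulrA dc mul1r. Qed.

Lemma ideal_gen_eq a b : a = b -> I a -> I b.
Proof. by move=> ->. Qed.

End IdealGen.

Lemma ideal_gen_map (S1 S2 : comNzRingType) (f : S1 -> S2)
    (P1 : S1 -> Prop) (P2 : S2 -> Prop) p :
  {morph f : a b / a + b} -> {morph f : a b / a * b} -> f 0 = 0 ->
  (forall s, P1 s -> ideal_gen P2 (f s)) -> ideal_gen P1 p -> ideal_gen P2 (f p).
Proof.
move=> fD fM f0 fP [n [a [s [Ps ->]]]].
elim/big_rec: _ => [|i x _ Ix]; first by rewrite f0; apply: ideal_gen0.
by rewrite fD fM; apply/ideal_genD/Ix/ideal_genM/fP.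
Qed.

Lemma ideal_gen_seq_comb (S : comNzRingType) (s : seq S) (c : nat -> S) :
  ideal_gen (fun g => g \in s) (\sum_(k < size s) c k * s`_k).
Proof. by exists (size s), (fun k => c k), (fun k => s`_k); split=> // k; apply: mem_nth. Qed.

(* Proves [ideal_gen P t] when [t = c] is a ring identity and [c] is built by
   sums, differences and left multiples from hypotheses [ideal_gen P e]. *)
Ltac ideal_gen_by c :=
  apply: (ideal_gen_eq (a := c)); first ring;
  repeat first [ eassumption | apply: ideal_genD | apply: ideal_genB
               | apply: ideal_genN | apply: ideal_genM ].

Section IdealGenCongr.
Variables (S : comNzRingType) (P : S -> Prop).
Local Notation I := (ideal_gen P).

Lemma ideal_gen_sub_trans a b c : I (a - b) -> I (b - c) -> I (a - c).
Proof. by move=> ab bc; ideal_gen_by ((a - b) + (b - c)). Qed.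

Lemma ideal_gen_subD a b pa pb : I (a - pa) -> I (b - pb) -> I (a + b - (pa + pb)).
Proof. by move=> ea eb; ideal_gen_by ((a - pa) + (b - pb)). Qed.

Lemma ideal_gen_subM a b pa pb : I (a - pa) -> I (b - pb) -> I (a * b - pa * pb).
Proof. by move=> ea eb; ideal_gen_by (b * (a - pa) + pa * (b - pb)). Qed.

Lemma ideal_gen_solve_l ta tb tc td pb pc pd :
  I (ta + tb - tc * td) -> I (tb - pb) -> I (tc - pc) -> I (td - pd) ->
  I (ta - (pc * pd - pb)).
Proof.
move=> e1 e2 e3 e4.
by ideal_gen_by ((ta + tb - tc * td) - (tb - pb) + td * (tc - pc) + pc * (td - pd)).
Qed.

Lemma ideal_gen_solve_r ta tb tc td pa pc pd :
  I (ta + tb - tc * td) -> I (ta - pa) -> I (tc - pc) -> I (td - pd) ->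
  I (tb - (pc * pd - pa)).
Proof. by rewrite [ta + tb]addrC; apply: ideal_gen_solve_l. Qed.

End IdealGenCongr.

(* A variable [t...] stands for the trace of the word spelled by the rest of its
   name in h, g, a = c1, b = c2, where a prime marks the inverse of the
   preceding letter: [th'a] is t_{h^-1 a} and [tab'] is t_{a b^-1}. *)
Section TraceIdentities.
Variables (S : comNzRingType) (P : S -> Prop).
Local Notation I := (ideal_gen P).

Lemma trace_inv_of_sum t1 tg tg' : I (tg + tg' - t1 * tg) -> I (t1 - 2) -> I (tg' - tg).
Proof. by move=> e1 e2; ideal_gen_by ((tg + tg' - t1 * tg) + tg * (t1 - 2)). Qed.

Lemma fricke_commuting t1 th tg thg th2 th2g th2g2 tg' :
  I (t1 - 2) -> I (th2 + t1 - th * th) -> I (th2g2 + t1 - thg * thg) ->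
  I (th2g + tg' - th * thg) -> I (tg' - tg) -> I (th2g2 + th2 - th2g * tg) ->
  I (th ^+ 2 + tg ^+ 2 + thg ^+ 2 - th * tg * thg - 4).
Proof.
move=> e1 e2 e3 e4 e5 e6.
by ideal_gen_by (2 * (t1 - 2) - (th2 + t1 - th * th) - (th2g2 + t1 - thg * thg)
  + tg * (th2g + tg' - th * thg) - tg * (tg' - tg) + (th2g2 + th2 - th2g * tg)).
Qed.

Lemma trace_hc1 th ta tb tab tha thb thab th'a thabb :
  I (tha + th'a - ta * th) -> I (thabb + tha - thab * tb) ->
  I (thabb + th'a - tab * thb) ->
  I (2 * tha - (th * ta + tb * thab - tab * thb)).
Proof.
move=> e1 e2 e3.
by ideal_gen_by ((tha + th'a - ta * th) + (thabb + tha - thab * tb)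
  - (thabb + th'a - tab * thb)).
Qed.

Lemma trace_hc2 th ta tb tab tha thb thab tba thba th'b thbaa :
  I (thb + th'b - tb * th) -> I (thab - thba) -> I (thbaa + thb - thba * ta) ->
  I (tab - tba) -> I (thbaa + th'b - tba * tha) ->
  I (2 * thb - (th * tb + ta * thab - tab * tha)).
Proof.
move=> e1 e2 e3 e4 e5.
by ideal_gen_by ((thb + th'b - tb * th) - ta * (thab - thba)
  + (thbaa + thb - thba * ta) + tha * (tab - tba) - (thbaa + th'b - tba * tha)).
Qed.

Lemma trace_hc3 th ta tb tab tha thb thab tab' thab' th'ab' thba thba' :
  I (tab + tab' - ta * tb) -> I (thab' + th'ab' - tab' * th) ->
  I (thab + thab' - tha * tb) -> I (thba + thba' - thb * ta) ->
  I (thba - thab) -> I (thba' - th'ab') ->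
  I (2 * thab - (th * (tab - ta * tb) + tha * tb + thb * ta)).
Proof.
move=> e1 e2 e3 e4 e5 e6.
by ideal_gen_by (- th * (tab + tab' - ta * tb) - (thab' + th'ab' - tab' * th)
  + (thab + thab' - tha * tb) + (thba + thba' - thb * ta) - (thba - thab)
  - (thba' - th'ab')).
Qed.

Lemma trace_c3 th ta tb tab tha thb thab th2ab tab' :
  I (th2ab + tab - thab * th) -> I (tab + tab' - ta * tb) ->
  I (th2ab + tab' - tha * thb) ->
  I (2 * tab - (th * thab + ta * tb - tha * thb)).
Proof.
move=> e1 e2 e3.
by ideal_gen_by ((th2ab + tab - thab * th) + (tab + tab' - ta * tb)
  - (th2ab + tab' - tha * thb)).
Qed.

End TraceIdentities.

Arguments inv_letter : simpl never.

Definition cancel_cons (l : letter) (r : seq letter) : seq letter :=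
  if r is l' :: r' then (if l' == inv_letter l then r' else l :: l' :: r')
  else [:: l].

Lemma red_cons l w : red (l :: w) = cancel_cons l (red w).
Proof. by []. Qed.

Lemma inv_letterK : involutive inv_letter.
Proof. by case=> a b; rewrite /inv_letter /= negbK. Qed.

Lemma red_id w : reduced w -> red w = w.
Proof.
elim: w => [|l w IHw] //= rw; rewrite IHw; last exact: path_sorted rw.
by case: w rw {IHw} => [|l' w] //= /andP[/negbTE ->].
Qed.

Lemma red_idem w : red (red w) = red w.
Proof. exact/red_id/red_reduced. Qed.

Lemma cancel_consK l r : reduced r -> cancel_cons l (cancel_cons (inv_letter l) r) = r.
Proof.
case: r => [|l' r] /=; first by rewrite eqxx.
case: eqP => [-> | _] rr; last by rewrite /= eqxx.
rewrite inv_letterK; case: r rr => [|l'' r] //= /andP[].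
by rewrite inv_letterK => /negbTE ->.
Qed.

Lemma red_mid w l v : red (w ++ l :: inv_letter l :: v) = red (w ++ v).
Proof.
elim: w => [|a w IHw]; last by rewrite !cat_cons !red_cons IHw.
by rewrite !red_cons cancel_consK ?red_reduced.
Qed.

Lemma red_catr w v : red (w ++ v) = red (w ++ red v).
Proof. by elim: w => [|l w IHw] /=; rewrite ?red_idem ?IHw. Qed.

Lemma red_catl w v : red (w ++ v) = red (red w ++ v).
Proof.
elim: w => [|l w IHw] //.
rewrite cat_cons red_cons IHw -(red_cons l (red w ++ v)) [red (l :: w)]red_cons.
case: (red w) => [|l' r] //; rewrite /cancel_cons; case: ifP => [/eqP -> | _] //.
by rewrite cat_cons (red_mid [::]).
Qed.

Definition inv_w (w : seq letter) := rev (map inv_letter w).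

Lemma inv_w_cons l w : inv_w (l :: w) = inv_w w ++ [:: inv_letter l].
Proof. by rewrite /inv_w /= rev_cons cats1. Qed.

Lemma red_inv w : red (inv_w (red w)) = red (inv_w w).
Proof.
elim: w => [|l w IHw] //.
rewrite inv_w_cons red_catl -IHw -red_catl red_cons.
case: (red w) => [|l' r] //=; case: ifP => [/eqP -> | _]; last by rewrite inv_w_cons.
by rewrite inv_w_cons inv_letterK -catA red_mid cats0.
Qed.

Lemma red_cat_inv w : red (w ++ inv_w w) = [::].
Proof.
elim: w => [|l w IHw] //.
by rewrite inv_w_cons cat_cons catA red_cons red_catl IHw /= eqxx.
Qed.

Lemma mkF2_eq w v : red w = red v -> mkF2 w = mkF2 v.
Proof. by move=> e; apply: val_inj. Qed.

Lemma mkF2_val (x : F2) : mkF2 (sval x) = x.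
Proof. by apply: val_inj; rewrite /= red_id //; case: x. Qed.

Lemma Gam_mk (g : Gam) : g = (g.1, mkF2 (sval g.2)).
Proof. by rewrite mkF2_val; case: g. Qed.

Lemma Gmul_mk n w m v : Gmul (n, mkF2 w) (m, mkF2 v) = (n + m, mkF2 (w ++ v)).
Proof. by congr (_, _); apply: mkF2_eq; rewrite /= -red_catl -red_catr. Qed.

Lemma Ginv_mk n w : Ginv (n, mkF2 w) = (- n, mkF2 (inv_w w)).
Proof. by congr (_, _); apply: mkF2_eq; apply: red_inv. Qed.

Section TraceModel.
Variables (R : comNzRingType) (u x1 x2 x3 y1 y2 y3 : R).

(* Coordinates on 1, c1, c2, c1 c2, with the relations c_i^2 = x_i c_i - 1 and
   c2 c1 = x3 - x1 x2 + x2 c1 + x1 c2 - c1 c2 that Cayley-Hamilton imposes on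
   2x2 matrices with tr c_i = x_i and tr (c1 c2) = x3. *)
Variant quat := Quat of R & R & R & R.

Definition qadd (a b : quat) : quat :=
  let: Quat a0 a1 a2 a3 := a in
  let: Quat b0 b1 b2 b3 := b in
  Quat (a0 + b0) (a1 + b1) (a2 + b2) (a3 + b3).

Definition qscale (r : R) (a : quat) : quat :=
  let: Quat a0 a1 a2 a3 := a in Quat (r * a0) (r * a1) (r * a2) (r * a3).

Definition qmul (a b : quat) : quat :=
  let: Quat a0 a1 a2 a3 := a in
  let: Quat b0 b1 b2 b3 := b in
  Quat (a0 * b0 - a1 * b1 + (x3 - x1 * x2) * a2 * b1 - a2 * b2 - x1 * a2 * b3
          - x2 * a3 * b1 - a3 * b3)
       (a0 * b1 + a1 * b0 + x1 * a1 * b1 + x2 * a2 * b1 + a2 * b3 + x3 * a3 * b1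
          - a3 * b2)
       (a0 * b2 - a1 * b3 + a2 * b0 + x1 * a2 * b1 + x2 * a2 * b2 + x3 * a2 * b3
          + a3 * b1)
       (a0 * b3 + a1 * b2 + x1 * a1 * b3 - a2 * b1 + a3 * b0 + x2 * a3 * b2
          + x3 * a3 * b3).

Definition qconj (a : quat) : quat :=
  let: Quat a0 a1 a2 a3 := a in
  Quat (a0 + x1 * a1 + x2 * a2 + x3 * a3) (- a1) (- a2) (- a3).

(* [HQuat a b] stands for a + h b, where h is central with h^2 = u h - 1. *)
Variant hquat := HQuat of quat & quat.

Definition hmul (a b : hquat) : hquat :=
  let: HQuat a0 a1 := a in
  let: HQuat b0 b1 := b in
  HQuat (qadd (qmul a0 b0) (qscale (-1) (qmul a1 b1)))
        (qadd (qadd (qmul a0 b1) (qmul a1 b0)) (qscale u (qmul a1 b1))).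

Definition hconj (a : hquat) : hquat :=
  let: HQuat a0 a1 := a in
  HQuat (qadd (qconj a0) (qscale u (qconj a1))) (qscale (-1) (qconj a1)).

Definition htr (a : hquat) : R :=
  let: HQuat (Quat a0 a1 a2 a3) (Quat a4 a5 a6 a7) := a in
  2 * a0 + x1 * a1 + x2 * a2 + x3 * a3 + u * a4 + y1 * a5 + y2 * a6 + y3 * a7.

Definition hq_of (a0 a1 a2 a3 a4 a5 a6 a7 : R) : hquat :=
  HQuat (Quat a0 a1 a2 a3) (Quat a4 a5 a6 a7).

Definition hone := hq_of 1 0 0 0 0 0 0 0.
Definition hc1 := hq_of 0 1 0 0 0 0 0 0.
Definition hc2 := hq_of 0 0 1 0 0 0 0 0.
Definition hh := hq_of 0 0 0 0 1 0 0 0.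

Arguments hmul : simpl never.
Arguments hconj : simpl never.
Arguments htr : simpl never.

Ltac hquat_ring :=
  unfold hmul, hconj; rewrite /=; congr HQuat; congr Quat; ring.

Ltac case_hquat a :=
  case: a => [[? ? ? ?] [? ? ? ?]].

Lemma hmulA a b c : hmul (hmul a b) c = hmul a (hmul b c).
Proof. by case_hquat a; case_hquat b; case_hquat c; hquat_ring. Qed.

Lemma hmul1r a : hmul hone a = a.
Proof. by case_hquat a; hquat_ring. Qed.

Lemma hmulr1 a : hmul a hone = a.
Proof. by case_hquat a; hquat_ring. Qed.

Lemma hconjM a b : hconj (hmul a b) = hmul (hconj b) (hconj a).
Proof. by case_hquat a; case_hquat b; hquat_ring. Qed.

Lemma hconj1 : hconj hone = hone.
Proof. by hquat_ring. Qed.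

Lemma hh_central a : hmul hh a = hmul a hh.
Proof. by case_hquat a; hquat_ring. Qed.

Lemma hconj_hh_central a : hmul (hconj hh) a = hmul a (hconj hh).
Proof. by case_hquat a; hquat_ring. Qed.

Lemma hh_mulV : hmul hh (hconj hh) = hone.
Proof. by hquat_ring. Qed.

Lemma hh_Vmul : hmul (hconj hh) hh = hone.
Proof. by hquat_ring. Qed.

Lemma hconjK_hh : hconj (hconj hh) = hh.
Proof. by hquat_ring. Qed.

Definition jgens : seq R :=
  [:: u ^+ 2 + x1 ^+ 2 + y1 ^+ 2 - u * x1 * y1 - 4;
      u ^+ 2 + x2 ^+ 2 + y2 ^+ 2 - u * x2 * y2 - 4;
      u ^+ 2 + x3 ^+ 2 + y3 ^+ 2 - u * x3 * y3 - 4;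
      2 * y1 - (u * x1 + x2 * y3 - x3 * y2);
      2 * y2 - (u * x2 + x1 * y3 - x3 * y1);
      2 * y3 - (u * (x3 - x1 * x2) + y1 * x2 + y2 * x1);
      2 * x3 - (u * y3 + x1 * x2 - y1 * y2)].

(* The two certificates below express the defects of the trace relations in
   the model as combinations of [jgens]; they were found by computer algebra. *)
Definition trace_sum_cert (a b : hquat) : seq R :=
  let: HQuat (Quat a0 a1 a2 a3) (Quat a4 a5 a6 a7) := a in
  let: HQuat (Quat b0 b1 b2 b3) (Quat b4 b5 b6 b7) := b in
  [:: - 2 * a5 * b5 - x2 * a5 * b7 - x2 * a7 * b5;
      - 2 * a6 * b6 - x1 * a6 * b7 - x1 * a7 * b6;
      - 2 * a7 * b7;
      2 * a2 * b7 - 2 * a3 * b6 + u * a6 * b7 - u * a7 * b6;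
      - 2 * a1 * b7 + 2 * a3 * b5 - u * a5 * b7 + u * a7 * b5;
      2 * a1 * b6 - 2 * a2 * b5 - y1 * a5 * b7 - 2 * u * a6 * b5 - y2 * a6 * b7
        - y1 * a7 * b5 - y2 * a7 * b6;
      - 2 * a5 * b6 - x1 * a5 * b7 - 2 * a6 * b5 - x2 * a6 * b7 - x1 * a7 * b5
        - x2 * a7 * b6].

Definition trace_comm_cert (a b : hquat) : seq R :=
  let: HQuat (Quat a0 a1 a2 a3) (Quat a4 a5 a6 a7) := a in
  let: HQuat (Quat b0 b1 b2 b3) (Quat b4 b5 b6 b7) := b in
  [:: 0; 0; 0;
      a2 * b7 - a3 * b6 + a6 * b3 + u * a6 * b7 - a7 * b2 - u * a7 * b6;
      - a1 * b7 + a3 * b5 - a5 * b3 - u * a5 * b7 + a7 * b1 + u * a7 * b5;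
      a1 * b6 - a2 * b5 + a5 * b2 + u * a5 * b6 - a6 * b1 - u * a6 * b5;
      0].

Lemma htr_sum_defect a b :
  2 * (htr (hmul a b) + htr (hmul a (hconj b)) - htr a * htr b) =
  \sum_(k < 7) (trace_sum_cert a b)`_k * jgens`_k.
Proof. by rewrite !big_ord_recr big_ord0; case_hquat a; case_hquat b; unfold hmul, hconj, htr; rewrite /=; ring. Qed.

Lemma htr_comm_defect a b :
  htr (hmul a b) - htr (hmul b a) = \sum_(k < 7) (trace_comm_cert a b)`_k * jgens`_k.
Proof. by rewrite !big_ord_recr big_ord0; case_hquat a; case_hquat b; unfold hmul, hconj, htr; rewrite /=; ring. Qed.

Definition gen (l : letter) : hquat :=
  let c := if l.1 then hc2 else hc1 in if l.2 then hconj c else c.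

Lemma gen_mulV l : hmul (gen l) (gen (inv_letter l)) = hone.
Proof. by case: l => [[] []]; rewrite /inv_letter; hquat_ring. Qed.

Lemma hconj_gen l : hconj (gen l) = gen (inv_letter l).
Proof. by case: l => [[] []]; rewrite /inv_letter; hquat_ring. Qed.

Definition rho_word (w : seq letter) : hquat := foldr (fun l => hmul (gen l)) hone w.

Lemma rho_word_cons l w : rho_word (l :: w) = hmul (gen l) (rho_word w).
Proof. by []. Qed.

Lemma rho_word_cat w v : rho_word (w ++ v) = hmul (rho_word w) (rho_word v).
Proof.
elim: w => [|l w IHw]; first by rewrite hmul1r.
by rewrite cat_cons !rho_word_cons IHw hmulA.
Qed.

Lemma rho_word_red w : rho_word (red w) = rho_word w.
Proof.
elim: w => [|l w IHw] //; rewrite red_cons rho_word_cons -IHw.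
case: (red w) => [|l' r] //; rewrite /cancel_cons; case: ifP => [/eqP -> | _] //.
by rewrite rho_word_cons -hmulA gen_mulV hmul1r.
Qed.

Lemma rho_word_inv w : rho_word (inv_w w) = hconj (rho_word w).
Proof.
elim: w => [|l w IHw]; first by rewrite hconj1.
by rewrite inv_w_cons rho_word_cat IHw rho_word_cons hmulr1 rho_word_cons hconjM hconj_gen.
Qed.

Lemma iter_hmul_central e k a : (forall b, hmul e b = hmul b e) ->
  hmul (iter k (hmul e) hone) a = hmul a (iter k (hmul e) hone).
Proof.
move=> ce; elim: k => [|k IHk]; first by rewrite hmul1r hmulr1.
by rewrite iterS hmulA IHk -hmulA ce hmulA.
Qed.

Lemma hconj_iter e k : (forall b, hmul (hconj e) b = hmul b (hconj e)) ->
  hconj (iter k (hmul e) hone) = iter k (hmul (hconj e)) hone.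
Proof.
move=> ce; elim: k => [|k IHk]; first exact: hconj1.
by rewrite !iterS hconjM IHk ce.
Qed.

Definition hpow (n : int) : hquat :=
  match n with
  | Posz k => iter k (hmul hh) hone
  | Negz k => iter k.+1 (hmul (hconj hh)) hone
  end.

Lemma hpow_central n a : hmul (hpow n) a = hmul a (hpow n).
Proof.
case: n => k; apply: iter_hmul_central; [exact: hh_central | exact: hconj_hh_central].
Qed.

Lemma hpowS n : hpow (n + 1) = hmul hh (hpow n).
Proof.
case: n => [k|[|k]]; first by have -> : Posz k + 1 = Posz k.+1 by lia.
  by rewrite /= hmulr1 hh_mulV.
have -> : Negz k.+1 + 1 = Negz k by rewrite !NegzE; lia.
by rewrite /hpow iterS -hmulA hh_mulV hmul1r.
Qed.

Lemma hpow_pred n : hpow (n - 1) = hmul (hconj hh) (hpow n).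
Proof.
case: n => [[|k]|k] //.
  have -> : Posz k.+1 - 1 = Posz k by lia.
  by rewrite /hpow iterS -hmulA hh_Vmul hmul1r.
by have -> : Negz k - 1 = Negz k.+1 by rewrite !NegzE; lia.
Qed.

Lemma hpowD m n : hpow (m + n) = hmul (hpow m) (hpow n).
Proof.
elim/int_rec: n => [|n IHn|n IHn]; first by rewrite addr0 hmulr1.
  by rewrite -addn1 PoszD addrA !hpowS IHn -hmulA hh_central hmulA.
by rewrite -addn1 PoszD opprD !addrA !hpow_pred IHn -hmulA hconj_hh_central hmulA.
Qed.

Lemma hconj_hpow n : hconj (hpow n) = hpow (- n).
Proof.
case: n => [[|k]|k]; first exact: hconj1.
  by rewrite [LHS]hconj_iter //; apply: hconj_hh_central.
rewrite [LHS]hconj_iter hconjK_hh ?NegzE ?opprK //.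
exact: hh_central.
Qed.

Definition rho (g : Gam) : hquat := hmul (hpow g.1) (rho_word (sval g.2)).

Lemma rho_mul x y : rho (Gmul x y) = hmul (rho x) (rho y).
Proof.
rewrite /rho /= rho_word_red rho_word_cat hpowD -!hmulA; congr hmul.
by rewrite !hmulA [hmul (hpow y.1) _]hpow_central.
Qed.

Lemma rho_inv x : rho (Ginv x) = hconj (rho x).
Proof.
rewrite /rho /= rho_word_red -[rev _]/(inv_w _) rho_word_inv hconjM hconj_hpow.
by rewrite hpow_central.
Qed.

Definition tau (g : Gam) : R := htr (rho g).

Lemma tau_sum x y : ideal_gen (fun g => g \in jgens)
  (2 * (tau (Gmul x y) + tau (Gmul x (Ginv y)) - tau x * tau y)).
Proof. by rewrite /tau !rho_mul rho_inv htr_sum_defect; apply: ideal_gen_seq_comb. Qed.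

Lemma tau_comm x y : ideal_gen (fun g => g \in jgens) (tau (Gmul x y) - tau (Gmul y x)).
Proof. by rewrite /tau !rho_mul htr_comm_defect; apply: ideal_gen_seq_comb. Qed.

Lemma tau_one : tau Gone = 2.
Proof. by rewrite /tau /rho /= hmulr1; unfold htr; rewrite /=; ring. Qed.

Lemma tau_gens :
  [/\ tau gh = u, tau gc1 = x1, tau gc2 = x2, tau gc3 = x3 &
      [/\ tau (Gmul gh gc1) = y1, tau (Gmul gh gc2) = y2 & tau (Gmul gh gc3) = y3]].
Proof.
rewrite /tau /rho /= !hmulr1 !hmul1r; unfold hmul, htr; rewrite /=.
by do !split; ring.
Qed.

End TraceModel.

Section CMonomEval.
Variables (I : choiceType) (S : comNzRingType) (f : I -> S).

Definition cmeval (m : cmonom I) : S := \prod_(i <- finsupp m) f i ^+ m i.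

Lemma cmeval_fsubset (m : cmonom I) (d : {fset I}) : (finsupp m `<=` d)%fset ->
  cmeval m = \prod_(i <- d) f i ^+ m i.
Proof.
move=> md; apply: big_fset_incl => // i _.
by rewrite -cmE_neq0 negbK => /eqP ->; rewrite expr0.
Qed.

Lemma cmeval_mmorphism : mmorphism cmeval.
Proof.
split=> [m1 m2|]; last by rewrite /cmeval mdom1 big_seq_fset0.
rewrite (cmeval_fsubset (fsubsetUl (finsupp m1) (finsupp m2))).
rewrite (cmeval_fsubset (fsubsetUr (finsupp m1) (finsupp m2))) -big_split /=.
by rewrite /cmeval mdomD; apply: eq_bigr => i _; rewrite cmM exprD.
Qed.

Lemma cmevalU i : cmeval (ucm i) = f i.
Proof. by rewrite /cmeval mdomU big_seq_fset1 cmUU expr1. Qed.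

End CMonomEval.

HB.instance Definition _ (I : choiceType) (S : comNzRingType) (f : I -> S) :=
  isMultiplicative.Build (cmonom I) S (cmeval f) (cmeval_mmorphism f).

Section CMonomAlgInd.
Variables (I : choiceType) (R : comNzRingType) (P : {malg R[cmonom I]} -> Prop).
Hypotheses (PC : forall c, P c%:MP) (PU : forall i, P << ucm i >>)
  (PD : forall a b, P a -> P b -> P (a + b))
  (PM : forall a b, P a -> P b -> P (a * b)).

Lemma malg_cmonom_ind_monom (m : cmonom I) : P << m >>.
Proof.
elim: {m}(mdeg m).+1 {-2}m (ltnSn (mdeg m)) => // n IHn m.
have [-> _|m_neq1] := eqVneq m mone; first exact: (PC 1).
have /fset0Pn[i im] : finsupp m != fset0.
  by apply: contra m_neq1 => /eqP m0; rewrite -mdeg_eq0 mdegE m0 big_seq_fset0.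
have -> : m = mmul (ucm i) (divcm m (ucm i)).
  apply/eqP/cmP => j; rewrite cmM divcmE cmU.
  by case: eqVneq => [<-|]; rewrite ?subn0 // subnKC // lt0n cmE_neq0.
have -> : << mmul (ucm i) (divcm m (ucm i)) >> =
          << ucm i >> * << divcm m (ucm i) >> :> {malg R[cmonom I]}.
  by rewrite malgM_def fgmulUU mulr1.
by rewrite mdegM mdegU add1n ltnS => mn; apply/PM/IHn.
Qed.

Lemma malg_cmonom_ind g : P g.
Proof.
rewrite (monalgE g); elim/big_rec: _ => [|k x _ Px]; first by rewrite -malgC0E.
apply: PD Px; have -> : << g@_k *g k >> = (g@_k)%:MP * << k >>.
  by rewrite malgM_def fgmulUU mulr1 mul1m.
exact/PM/malg_cmonom_ind_monom.
Qed.

End CMonomAlgInd.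

Definition psi_monom (m : cmonom 'I_7) : PGam := \prod_(i < 7) img_var i ^+ m i.

Lemma psi_monom_mmorphism : mmorphism psi_monom.
Proof.
split=> [m1 m2|]; last by rewrite /psi_monom big1 // => i _; rewrite cm1 expr0.
by rewrite /psi_monom -big_split; apply: eq_bigr => i _; rewrite cmM exprD.
Qed.

HB.instance Definition _ :=
  isMultiplicative.Build (cmonom 'I_7) PGam psi_monom psi_monom_mmorphism.
HB.instance Definition _ := GRing.RMorphism.copy psi (mmap (@malgC _ C) psi_monom).

Lemma psiV i : psi (V i) = img_var i.
Proof.
rewrite /psi mmapU /= mpolyC1E mul1r (bigD1 i) //= cmUU expr1 big1 ?mulr1 // => j.
by rewrite cmU eq_sym => /negbTE ->; rewrite expr0.
Qed.

Lemma psiD : {morph psi : p q / p + q}. Proof. exact: rmorphD. Qed.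
Lemma psiM : {morph psi : p q / p * q}. Proof. exact: rmorphM. Qed.
Lemma psiB : {morph psi : p q / p - q}. Proof. exact: rmorphB. Qed.
Lemma psiX p n : psi (p ^+ n) = psi p ^+ n. Proof. exact: rmorphXn. Qed.
Lemma psi_nat n : psi n%:R = n%:R. Proof. exact: rmorph_nat. Qed.

Lemma psiC c : psi c%:MP = c%:MP.
Proof. exact: (mmapC (f := @malgC _ C) (h := psi_monom)). Qed.

Definition tauQ (g : Gam) : Q7 := tau vu vx1 vx2 vx3 vy1 vy2 vy3 g.

Definition Phi (p : PGam) : Q7 := mmap (@malgC _ C) (cmeval tauQ) p.

HB.instance Definition _ := GRing.RMorphism.copy Phi (mmap (@malgC _ C) (cmeval tauQ)).

Lemma PhiD : {morph Phi : p q / p + q}. Proof. exact: rmorphD. Qed.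
Lemma PhiB : {morph Phi : p q / p - q}. Proof. exact: rmorphB. Qed.
Lemma PhiM : {morph Phi : p q / p * q}. Proof. exact: rmorphM. Qed.

Lemma Phi_tvar g : Phi (tvar g) = tauQ g.
Proof.
change (mmap (@malgC _ C) (cmeval tauQ) (tvar g) = tauQ g).
by rewrite mmapU /= mpolyC1E mul1r cmevalU.
Qed.

(* Keeps [Gmul gh gc_i] folded when [img_var] is reduced, as in [tau_gens]. *)
Arguments Gmul : simpl never.

Lemma Phi_img i : Phi (img_var i) = V i.
Proof.
have [Eu Ex1 Ex2 Ex3 [Ey1 Ey2 Ey3]] := tau_gens vu vx1 vx2 vx3 vy1 vy2 vy3.
case: i => [[|[|[|[|[|[|[|k]]]]]]] ilt]; last by exfalso; move: ilt; rewrite !ltnS ltn0.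
all: rewrite [img_var _]/= Phi_tvar /tauQ ?(Eu, Ex1, Ex2, Ex3, Ey1, Ey2, Ey3).
all: by congr V; apply: val_inj.
Qed.

Lemma PhiC c : Phi c%:MP = c%:MP.
Proof. exact: (mmapC (f := @malgC _ C) (h := cmeval tauQ)). Qed.

(* Rewriting closed patterns inside sums of [PGam] or [Q7] can trigger costly
   conversions between distinct polynomials, hence the [congr] steps below. *)
Lemma Phi_psi q : Phi (psi q) = q.
Proof.
elim/malg_cmonom_ind: q => [c|i|a b|a b].
- by rewrite psiC PhiC.
- by rewrite -/(V i) psiV Phi_img.
- by move=> IHa IHb; rewrite psiD PhiD; congr (_ + _).
- by move=> IHa IHb; rewrite psiM PhiM; congr (_ * _).
Qed.

Lemma Phi_trace_sum x y :
  Phi (tvar (Gmul x y) + tvar (Gmul x (Ginv y)) - tvar x * tvar y) =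
  tauQ (Gmul x y) + tauQ (Gmul x (Ginv y)) - tauQ x * tauQ y.
Proof.
rewrite PhiB; congr (_ - _); [rewrite PhiD; congr (_ + _) | rewrite PhiM; congr (_ * _)].
all: exact: Phi_tvar.
Qed.

Lemma Phi_trace_diff x y : Phi (tvar x - tvar y) = tauQ x - tauQ y.
Proof. by rewrite PhiB; congr (_ - _); apply: Phi_tvar. Qed.

Lemma Phi_charI p : charI p -> J (Phi p).
Proof.
apply: ideal_gen_map; [exact: PhiD | exact: PhiM | exact: rmorph0 |].
move=> _ [[x [y ->]] | [[x [y ->]] | ->]].
- rewrite Phi_trace_sum.
  apply: (@ideal_gen_cancel _ _ 2 ((2 : C)^-1)%:MP).
    by rewrite -mpolyC_nat -mpolyCM mulVf ?mpolyC1E // pnatr_eq0.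
  exact: tau_sum.
- by rewrite Phi_trace_diff; apply: tau_comm.
- rewrite PhiB (rmorph_nat (Phi : PGam -> Q7)) Phi_tvar /tauQ tau_one subrr.
  exact: ideal_gen0.
Qed.

Lemma charI_psi_J q : charI (psi q) -> J q.
Proof. by move/Phi_charI; rewrite Phi_psi. Qed.

Definition tw (n : int) (w : seq letter) : PGam := tvar (n, mkF2 w).

Local Notation la := (false, false).
Local Notation lb := (true, false).
Local Notation la' := (false, true).
Local Notation lb' := (true, true).

Lemma charI_trace_sum n m N1 N2 w v w1 w2 : N1 = n + m -> N2 = n - m ->
  red w1 = red (w ++ v) -> red w2 = red (w ++ inv_w v) ->
  charI (tw N1 w1 + tw N2 w2 - tw n w * tw m v).
Proof.
move=> -> -> /mkF2_eq e1 /mkF2_eq e2; rewrite /tw e1 e2.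
apply: ideal_gen_sub; left; exists (n, mkF2 w), (m, mkF2 v).
by rewrite Ginv_mk !Gmul_mk.
Qed.

Lemma charI_trace_comm n w v w1 w2 : red w1 = red (w ++ v) -> red w2 = red (v ++ w) ->
  charI (tw n w1 - tw n w2).
Proof.
move=> /mkF2_eq e1 /mkF2_eq e2; rewrite /tw e1 e2.
apply: ideal_gen_sub; right; left; exists (n, mkF2 w), (0, mkF2 v).
by rewrite !Gmul_mk addr0 add0r.
Qed.

Lemma charI_trace_one : charI (tw 0 [::] - 2).
Proof. by apply: ideal_gen_sub; right; right. Qed.

Lemma charI_trace_inv m N v w' : N = - m -> red w' = red (inv_w v) ->
  charI (tw N w' - tw m v).
Proof.
move=> -> e; apply: (trace_inv_of_sum _ charI_trace_one).
exact: (@charI_trace_sum 0 m m (- m) [::] v v w' (esym (add0r m)) (esym (sub0r m))).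
Qed.

Lemma charI_rel_fricke w :
  charI (tw 1 [::] ^+ 2 + tw 0 w ^+ 2 + tw 1 w ^+ 2 - tw 1 [::] * tw 0 w * tw 1 w - 4).
Proof.
have ww' : red [::] = red (w ++ inv_w w) by rewrite red_cat_inv.
exact: (fricke_commuting charI_trace_one
  (@charI_trace_sum 1 1 2 0 [::] [::] [::] [::] erefl erefl erefl erefl)
  (@charI_trace_sum 1 1 2 0 w w (w ++ w) [::] erefl erefl erefl ww')
  (@charI_trace_sum 1 1 2 0 [::] w w (inv_w w) erefl erefl erefl erefl)
  (@charI_trace_inv 0 0 w (inv_w w) erefl erefl)
  (@charI_trace_sum 2 0 2 2 w w (w ++ w) [::] erefl erefl erefl ww')).
Qed.

Lemma charI_rel_hc1 :
  charI (2 * tw 1 [:: la] - (tw 1 [::] * tw 0 [:: la]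
         + tw 0 [:: lb] * tw 1 [:: la; lb] - tw 0 [:: la; lb] * tw 1 [:: lb])).
Proof.
exact: (trace_hc1
  (@charI_trace_sum 0 1 1 (-1) [:: la] [::] [:: la] [:: la] erefl erefl erefl erefl)
  (@charI_trace_sum 1 0 1 1 [:: la; lb] [:: lb] [:: la; lb; lb] [:: la]
     erefl erefl erefl erefl)
  (@charI_trace_sum 0 1 1 (-1) [:: la; lb] [:: lb] [:: la; lb; lb] [:: la]
     erefl erefl erefl erefl)).
Qed.

Lemma charI_rel_hc2 :
  charI (2 * tw 1 [:: lb] - (tw 1 [::] * tw 0 [:: lb]
         + tw 0 [:: la] * tw 1 [:: la; lb] - tw 0 [:: la; lb] * tw 1 [:: la])).
Proof.
exact: (trace_hc2
  (@charI_trace_sum 0 1 1 (-1) [:: lb] [::] [:: lb] [:: lb] erefl erefl erefl erefl)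
  (@charI_trace_comm 1 [:: la] [:: lb] [:: la; lb] [:: lb; la] erefl erefl)
  (@charI_trace_sum 1 0 1 1 [:: lb; la] [:: la] [:: lb; la; la] [:: lb]
     erefl erefl erefl erefl)
  (@charI_trace_comm 0 [:: la] [:: lb] [:: la; lb] [:: lb; la] erefl erefl)
  (@charI_trace_sum 0 1 1 (-1) [:: lb; la] [:: la] [:: lb; la; la] [:: lb]
     erefl erefl erefl erefl)).
Qed.

Lemma charI_rel_hc3 :
  charI (2 * tw 1 [:: la; lb] - (tw 1 [::] * (tw 0 [:: la; lb] - tw 0 [:: la] * tw 0 [:: lb])
         + tw 1 [:: la] * tw 0 [:: lb] + tw 1 [:: lb] * tw 0 [:: la])).
Proof.
exact: (trace_hc3
  (@charI_trace_sum 0 0 0 0 [:: la] [:: lb] [:: la; lb] [:: la; lb']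
     erefl erefl erefl erefl)
  (@charI_trace_sum 0 1 1 (-1) [:: la; lb'] [::] [:: la; lb'] [:: la; lb']
     erefl erefl erefl erefl)
  (@charI_trace_sum 1 0 1 1 [:: la] [:: lb] [:: la; lb] [:: la; lb']
     erefl erefl erefl erefl)
  (@charI_trace_sum 1 0 1 1 [:: lb] [:: la] [:: lb; la] [:: lb; la']
     erefl erefl erefl erefl)
  (@charI_trace_comm 1 [:: lb] [:: la] [:: lb; la] [:: la; lb] erefl erefl)
  (@charI_trace_inv (-1) 1 [:: la; lb'] [:: lb; la'] erefl erefl)).
Qed.

Lemma charI_rel_c3 :
  charI (2 * tw 0 [:: la; lb] - (tw 1 [::] * tw 1 [:: la; lb]
         + tw 0 [:: la] * tw 0 [:: lb] - tw 1 [:: la] * tw 1 [:: lb])).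
Proof.
exact: (trace_c3
  (@charI_trace_sum 1 1 2 0 [:: la; lb] [::] [:: la; lb] [:: la; lb]
     erefl erefl erefl erefl)
  (@charI_trace_sum 0 0 0 0 [:: la] [:: lb] [:: la; lb] [:: la; lb']
     erefl erefl erefl erefl)
  (@charI_trace_sum 1 1 2 0 [:: la] [:: lb] [:: la; lb] [:: la; lb']
     erefl erefl erefl erefl)).
Qed.

Lemma jgens_morph (S1 S2 : comNzRingType) (f : S1 -> S2)
    (u x1 x2 x3 y1 y2 y3 : S1) (U X1 X2 X3 Y1 Y2 Y3 : S2) :
  {morph f : a b / a + b} -> {morph f : a b / a - b} -> {morph f : a b / a * b} ->
  (forall a n, f (a ^+ n) = f a ^+ n) -> (forall n, f n%:R = n%:R) ->
  f u = U -> f x1 = X1 -> f x2 = X2 -> f x3 = X3 ->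
  f y1 = Y1 -> f y2 = Y2 -> f y3 = Y3 ->
  map f (jgens u x1 x2 x3 y1 y2 y3) = jgens U X1 X2 X3 Y1 Y2 Y3.
Proof.
move=> fD fB fM fX fN <- <- <- <- <- <- <-.
by rewrite /jgens /= !(fN, fB, fD, fM, fX).
Qed.

Lemma psi_Jgens : map psi Jgens =
  jgens (tw 1 [::]) (tw 0 [:: la]) (tw 0 [:: lb]) (tw 0 [:: la; lb])
        (tw 1 [:: la]) (tw 1 [:: lb]) (tw 1 [:: la; lb]).
Proof.
apply: (jgens_morph psiD psiB psiM psiX psi_nat).
all: exact: psiV.
Qed.

Lemma J_charI_psi q : J q -> charI (psi q).
Proof.
apply: ideal_gen_map; [exact: psiD | exact: psiM | exact: rmorph0 |].
move=> g /(map_f psi); rewrite psi_Jgens /jgens !inE.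
case/or4P=> [/eqP-> | /eqP-> | /eqP-> | /or4P[/eqP-> | /eqP-> | /eqP-> | /eqP->]].
- exact: charI_rel_fricke.
- exact: charI_rel_fricke.
- exact: charI_rel_fricke.
- exact: charI_rel_hc1.
- exact: charI_rel_hc2.
- exact: charI_rel_hc3.
- exact: charI_rel_c3.
Qed.

Definition represented (n : int) (w : seq letter) : Prop :=
  exists q : Q7, charI (tw n w - psi q).

Definition reachable (w : seq letter) : Prop := forall n, represented n w.

Lemma represented_trace_sum n m N1 N2 w v w1 w2 : N1 = n + m -> N2 = n - m ->
  red w1 = red (w ++ v) -> red w2 = red (w ++ inv_w v) ->
  represented n w -> represented m v -> represented N1 w1 <-> represented N2 w2.
Proof.
move=> eN1 eN2 e1 e2 [qw rw] [qv rv]; have rel := charI_trace_sum eN1 eN2 e1 e2.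
split=> -[q rq]; exists (qw * qv - q); rewrite psiB psiM.
  exact: ideal_gen_solve_r rel rq rw rv.
exact: ideal_gen_solve_l rel rq rw rv.
Qed.

Lemma represented_var n w i : psi (V i) = tw n w -> represented n w.
Proof. by move=> e; exists (V i); rewrite e subrr; apply: ideal_gen0. Qed.

Lemma represented_nil0 : represented 0 [::].
Proof. by exists 2; rewrite psi_nat; apply: charI_trace_one. Qed.

Lemma represented_nil1 : represented 1 [::].
Proof. exact: (represented_var (psiV (@Ordinal 7 0 isT))). Qed.

Lemma reachable_of_represented01 w :
  represented 0 w -> represented 1 w -> reachable w.
Proof.
move=> r0 r1.
have shift k : represented k w -> represented (k + 1) w <-> represented (k - 1) w.
  by move=> rk; apply: (represented_trace_sum erefl erefl _ _ rk represented_nil1);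
    rewrite cats0.
suff rep2 k : represented k w /\ represented (k + 1) w by move=> k; case: (rep2 k).
elim/int_rec: k => [|n [rn rn1]|n [rn rn1]]; first exact: (conj r0 r1).
  have -> : Posz n.+1 = n + 1 by lia.
  split; first exact: rn1.
  apply: (shift _ rn1).2; have -> : n%:Z + 1 - 1 = n by lia.
  exact: rn.
have -> : - Posz n.+1 = - n%:Z - 1 by lia.
split; first exact: (shift _ rn).1 rn1.
have -> : - n%:Z - 1 + 1 = - n%:Z by lia.
exact: rn.
Qed.

Lemma reachable_trace_sum w v w1 w2 :
  red w1 = red (w ++ v) -> red w2 = red (w ++ inv_w v) ->
  reachable w -> reachable v -> reachable w1 <-> reachable w2.
Proof.
move=> e1 e2 rw rv.
have rel n := represented_trace_sum (esym (addr0 n)) (esym (subr0 n)) e1 e2 (rw n) (rv 0).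
by split=> r n; [exact: (rel n).1 | exact: (rel n).2].
Qed.

Lemma reachable_rot w v : reachable (v ++ w) -> reachable (w ++ v).
Proof.
move=> r n; have [q rq] := r n; exists q.
exact: ideal_gen_sub_trans (charI_trace_comm n (erefl (red (w ++ v))) erefl) rq.
Qed.

Lemma reachable_nil : reachable [::].
Proof. exact: reachable_of_represented01 represented_nil0 represented_nil1. Qed.

Lemma reachable_letter l : reachable [:: l].
Proof.
have pos b : reachable [:: (b, false)].
  case: b; apply: reachable_of_represented01.
  - exact: (represented_var (psiV (@Ordinal 7 2 isT))).
  - exact: (represented_var (psiV (@Ordinal 7 5 isT))).
  - exact: (represented_var (psiV (@Ordinal 7 1 isT))).
  - exact: (represented_var (psiV (@Ordinal 7 4 isT))).
case: l => b []; last exact: pos.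
have rel := @reachable_trace_sum [::] [:: (b, false)] _ [:: (b, true)]
  erefl erefl reachable_nil (pos b).
exact: rel.1 (pos b).
Qed.

Lemma reachable_ab : reachable [:: la; lb].
Proof.
apply: reachable_of_represented01.
- exact: (represented_var (psiV (@Ordinal 7 3 isT))).
- exact: (represented_var (psiV (@Ordinal 7 6 isT))).
Qed.

Lemma reachable_inv_last x l :
  reachable x -> reachable (x ++ [:: l]) -> reachable (x ++ [:: inv_letter l]).
Proof.
move=> rx; exact: (reachable_trace_sum erefl erefl rx (reachable_letter l)).1.
Qed.

Lemma reachable_square x l :
  reachable x -> reachable (x ++ [:: l]) -> reachable (x ++ [:: l; l]).
Proof.
move=> rx rxl.
have e1 : red (x ++ [:: l; l]) = red ((x ++ [:: l]) ++ [:: l]) by rewrite -catA.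
have e2 : red x = red ((x ++ [:: l]) ++ inv_w [:: l]) by rewrite -catA red_mid cats0.
exact: (reachable_trace_sum e1 e2 rxl (reachable_letter l)).2.
Qed.

Fixpoint alternating (b : bool) (k : nat) : seq letter :=
  if k is k'.+1 then (b, false) :: alternating (~~ b) k' else [::].

Lemma alternating_rcons b k :
  alternating b k.+1 = alternating b k ++ [:: (odd k (+) b, false)].
Proof.
elim: k b => [|k IHk] b //.
rewrite -[alternating b k.+2]/((b, false) :: alternating (~~ b) k.+1) IHk /=.
by case: (odd k); case: b.
Qed.

Lemma alternating_doubleS b m :
  alternating b m.+1.*2 = alternating b m.*2 ++ [:: (b, false); (~~ b, false)].
Proof.
by rewrite doubleS !alternating_rcons -catA /= odd_double.
Qed.

Lemma reachable_ab_pow m : reachable (alternating false m.*2).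
Proof.
suff two_step k :
    reachable (alternating false k.*2) /\ reachable (alternating false k.+1.*2).
  exact: (two_step m).1.
elim: k => [|k [rk rk1]]; first exact: (conj reachable_nil reachable_ab).
split; first exact: rk1.
have e1 : red (alternating false k.+2.*2) =
          red (alternating false k.+1.*2 ++ [:: la; lb]) by rewrite alternating_doubleS.
have e2 : red (alternating false k.*2) =
          red (alternating false k.+1.*2 ++ inv_w [:: la; lb]).
  rewrite alternating_doubleS -catA /=.
  by rewrite -[[:: la, lb, _ & _]]/([:: la] ++ [:: lb, lb' & [:: la']]) catA
             red_mid -catA (red_mid _ _ [::]) cats0.
exact: (reachable_trace_sum e1 e2 rk1 reachable_ab).2 rk.
Qed.

Lemma reachable_alternating_even b m : reachable (alternating b m.*2).
Proof.
case: b; last exact: reachable_ab_pow.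
case: m => [|m]; first exact: reachable_nil.
apply: (@reachable_rot [:: lb] (alternating false m.*2.+1)).
have -> : alternating false m.*2.+1 ++ [:: lb] = alternating false m.+1.*2.
  by rewrite alternating_doubleS alternating_rcons odd_double -catA.
exact: reachable_ab_pow.
Qed.

Lemma alternating_rcons_odd b m :
  alternating b m.*2.+2 = alternating b m.*2.+1 ++ [:: (~~ b, false)].
Proof. by rewrite alternating_rcons /= odd_double; case: b. Qed.

Lemma reachable_alternating_odd b m : reachable (alternating b m.*2.+1).
Proof.
elim: m b => [|m IHm] b; first exact: reachable_letter.
have -> : alternating b m.+1.*2.+1 =
          [:: (b, false)] ++ (alternating (~~ b) m.*2.+1 ++ [:: (b, false)]).
  rewrite doubleS -[alternating b _]/((b, false) :: alternating (~~ b) m.*2.+2).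
  by rewrite alternating_rcons_odd negbK.
apply: reachable_rot; rewrite -catA; apply: reachable_square; first exact: IHm.
rewrite -[b in [:: (b, false)]]negbK -alternating_rcons_odd -doubleS.
exact: reachable_alternating_even.
Qed.

Lemma reachable_alternating b k : reachable (alternating b k).
Proof.
rewrite -(odd_double_half k); case: (odd k).
  exact: reachable_alternating_odd.
exact: reachable_alternating_even.
Qed.

Lemma positive_word_cases w : all (fun l => ~~ l.2) w ->
  (exists p l s, w = p ++ l :: l :: s) \/ (exists b, w = alternating b (size w)).
Proof.
elim: w => [|l w IHw] /=; first by right; exists true.
case/andP=> pl pw; case: (IHw pw) => [[p [l' [s ->]]] | [b eb]].
  by left; exists (l :: p), l', s.
case: w eb {IHw pw} => [|l' w] eb.
  by right; exists l.1; case: l pl => a [].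
case: eb => el' ew; case: l pl => a [] // _.
have [eab | nab] := eqVneq a b.
  by left; exists [::], (a, false), w; rewrite el' eab.
have eb : b = ~~ a by case: a b nab {el' ew} => [] [].
by right; exists a; rewrite el' {1}ew eb /= !negbK.
Qed.

Lemma reachable_positive w : all (fun l => ~~ l.2) w ->
  (forall v, all (fun l => ~~ l.2) v -> (size v < size w)%N -> reachable v) ->
  reachable w.
Proof.
move=> pw IH; case: (positive_word_cases pw) => [[p [l [s ew]]] | [b ->]].
  move: pw; rewrite ew all_cat /= => /andP[pp /and3P[pl _ ps]].
  rewrite -[l :: l :: s]/([:: l; l] ++ s) catA; apply: reachable_rot.
  rewrite catA; apply: reachable_square; apply: IH.
  - by rewrite all_cat ps pp.
  - by rewrite ew !size_cat /=; lia.
  - by rewrite !all_cat ps pp /= pl.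
  - by rewrite ew !size_cat /=; lia.
exact: reachable_alternating.
Qed.

Lemma reachable_all w : reachable w.
Proof.
have [N] := ubnP (size w + count snd w); elim: N w => // N IHN w.
rewrite ltnS => wN; have [/hasP[l lw linv] | nw] := boolP (has snd w).
  case/splitPr: lw wN => p s; rewrite size_cat count_cat /= linv /= => wN.
  have -> : l = inv_letter (l.1, false) by case: l linv => a [].
  rewrite -[_ :: s]/([:: _] ++ s) catA; apply: reachable_rot; rewrite catA.
  apply: reachable_inv_last; apply: IHN.
    by rewrite size_cat count_cat; lia.
  by rewrite !size_cat !count_cat /=; lia.
have count0 v : all (fun l => ~~ l.2) v -> count snd v = 0.
  by move=> pv; apply/eqP; rewrite -leqn0 leqNgt -has_count -all_predC.
have pw : all (fun l => ~~ l.2) w by rewrite all_predC.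
apply: (reachable_positive pw) => v pv vw; apply: IHN.
by move: wN; rewrite !count0 // !addn0; apply: leq_trans.
Qed.

Lemma tvar_represented (g : Gam) : exists q : Q7, charI (tvar g - psi q).
Proof. by rewrite [g]Gam_mk; apply: reachable_all. Qed.

Theorem proposition3p3 :
  (forall p : PGam, exists q : Q7, charI (p - psi q)) /\
  (forall q : Q7, charI (psi q) <-> J q).
Proof.
split=> [p | q]; last by split; [exact: charI_psi_J | exact: J_charI_psi].
elim/malg_cmonom_ind: p => [c | g | a b [qa ra] [qb rb] | a b [qa ra] [qb rb]].
- by exists c%:MP; rewrite psiC subrr; apply: ideal_gen0.
- exact: tvar_represented.
- by exists (qa + qb); rewrite psiD; exact: ideal_gen_subD ra rb.
- by exists (qa * qb); rewrite psiM; exact: ideal_gen_subM ra rb.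
Qed.
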